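(* Let $A$ be an observable on $\mathbb C^d$ with orthonormal eigenbasis $\{\varphi_k\}_{k=0}^{d-1}$, let $\Phi$ be a unit vector and $p_k=|\langle\varphi_k,\Phi\rangle|^2$. Then for every unit vector $\Psi\in\mathbb C^d$, $$d(T_{A\Phi}\Psi,\Phi)\le 2\min_k d(\Phi,\varphi_k)=2\sqrt2\,\sqrt{1-\max_k\sqrt{p_k}}.$$
   Context: $\mathcal H=\mathbb C^d$ with the standard inner product; states are unit vectors. An observable $A$ is non-degenerate and identified with its orthonormal eigenbasis $\{\varphi_k\}_{k=0}^{d-1}$. Bures metric: $d(\Phi,\Psi)=\sqrt{2-2|\langle\Phi,\Psi\rangle|}$. Physical imposition operator: $T_{A\Phi}\Psi=\sum_{k=0}^{d-1}|\langle\varphi_k,\Phi\rangle|\,u_k(\Psi)\,\varphi_k$, where $u_k(\Psi)=\langle\varphi_k,\Psi\rangle/|\langle\varphi_k,\Psi\rangle|$ if $\langle\varphi_k,\Psi\rangle\ne0$ and $u_k(\Psi)=1$ otherwise. *)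

(* The scalar field is an arbitrary numClosedFieldType C
   (an algebraically closed field with conjugation, norm and order, e.g. C = ℂ or algC). *)
From HB Require Import structures.
From mathcomp Require Import all_boot all_order all_algebra.
Set Implicit Arguments. Unset Strict Implicit. Unset Printing Implicit Defensive.
Import Order.TTheory GRing.Theory Num.Theory.
Local Open Scope ring_scope.

Definition inner (C : numClosedFieldType) (d : nat) (u v : 'I_d -> C) : C :=
  \sum_(i < d) (u i)^* * v i.

Definition unit_vec (C : numClosedFieldType) (d : nat) (u : 'I_d -> C) : Prop :=
  inner u u = 1.

Definition orthonormal_basis (C : numClosedFieldType) (d : nat)
  (phi : 'I_d -> 'I_d -> C) : Prop :=
  forall j k : 'I_d, inner (phi j) (phi k) = (j == k)%:R.

Definition bures (C : numClosedFieldType) (d : nat) (u v : 'I_d -> C) : C :=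
  sqrtC (2 - 2 * `|inner u v|).

Definition phase (C : numClosedFieldType) (d : nat) (phi : 'I_d -> 'I_d -> C)
  (Psi : 'I_d -> C) (k : 'I_d) : C :=
  if inner (phi k) Psi != 0 then inner (phi k) Psi / `|inner (phi k) Psi| else 1.

Definition imposition (C : numClosedFieldType) (d : nat) (phi : 'I_d -> 'I_d -> C)
  (Phi Psi : 'I_d -> C) : 'I_d -> C :=
  fun i => \sum_(k < d) `|inner (phi k) Phi| * phase phi Psi k * phi k i.

(* Write a_k = |<φ_k,Φ>| and u_k = u_k(Ψ).  Since |u_k| = 1,
     <T Ψ, Φ> = Σ_k a_k conj(u_k) <φ_k,Φ>,   each term having modulus a_k^2.
   Bessel's inequality Σ_k a_k^2 <= |Φ|^2 = 1 then gives, for every j,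
     2 a_j^2 - 1 <= |<T Ψ, Φ>| <= 1,
   isolating the j-th term by the reverse triangle inequality.  An elementary
   inequality turns this into d(TΨ,Φ) = sqrt(2 - 2|<TΨ,Φ>|) <= 2 sqrt(2 - 2 a_j),
   i.e. d(TΨ,Φ) <= 2 d(Φ,φ_j).  Finally d(Φ,φ_k) = sqrt 2 sqrt(1 - a_k) is
   antitone in a_k = sqrt p_k, so the minimal distance is attained where
   sqrt p_k is maximal. *)
From HB Require Import structures.
From mathcomp Require Import all_boot all_order all_algebra ring.
Set Implicit Arguments. Unset Strict Implicit.
Import Order.TTheory GRing.Theory Num.Theory.
Local Open Scope ring_scope.

Section BigSelect.
Variables (T : Type) (P : {pred T}) (op : T -> T -> T) (le : rel T).
Hypothesis op_select : forall x y, x \in P -> y \in P -> op x y = x \/ op x y = y.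
Hypothesis op_le : forall x y, x \in P -> y \in P -> le (op x y) x /\ le (op x y) y.
Hypothesis le_trans : transitive le.

Lemma big_select (I : Type) (r : seq I) (x0 : T) (F : I -> T) :
  x0 \in P -> (forall i, F i \in P) ->
  \big[op/x0]_(i <- r) F i \in P /\
  (\big[op/x0]_(i <- r) F i = x0 \/ exists i, \big[op/x0]_(i <- r) F i = F i).
Proof.
move=> Px0 PF; elim/big_rec: _ => [|i y _ [Py y_sel]]; first by split; [|left].
by have [->|->] := op_select (PF i) Py; split => //; right; exists i.
Qed.

Lemma big_select_le (I : eqType) (r : seq I) (x0 : T) (F : I -> T) k :
  x0 \in P -> (forall i, F i \in P) -> k \in r -> le (\big[op/x0]_(i <- r) F i) (F k).
Proof.
move=> Px0 PF; elim: r => // i r IHr; rewrite inE big_cons.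
have [Pr _] := big_select r Px0 PF.
have [le_opF le_opr] := op_le (PF i) Pr.
by case/orP => [/eqP ->|/IHr]; last exact: le_trans.
Qed.
End BigSelect.

Section RealMinMax.
Variable R : numDomainType.

Lemma real_min_select (x y : R) : x \is Num.real -> y \is Num.real ->
  Num.min x y = x \/ Num.min x y = y.
Proof. by move=> xr yr; case: (real_leP xr yr) => _; [left | right]. Qed.

Lemma real_min_le (x y : R) : x \is Num.real -> y \is Num.real ->
  Num.min x y <= x /\ Num.min x y <= y.
Proof. by move=> xr yr; case: (real_leP xr yr) => [xy | /ltW yx]; rewrite lexx. Qed.

Lemma real_max_select (x y : R) : x \is Num.real -> y \is Num.real ->
  Num.max x y = x \/ Num.max x y = y.
Proof. by move=> xr yr; case: (real_leP xr yr) => _; [right | left]. Qed.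

Lemma real_max_ge (x y : R) : x \is Num.real -> y \is Num.real ->
  x <= Num.max x y /\ y <= Num.max x y.
Proof. by move=> xr yr; case: (real_leP xr yr) => [xy | /ltW yx]; rewrite lexx. Qed.

Lemma real_bigmin_le (I : eqType) (r : seq I) (x0 : R) (F : I -> R) k :
  x0 \is Num.real -> (forall i, F i \is Num.real) -> k \in r ->
  \big[Num.min/x0]_(i <- r) F i <= F k.
Proof.
exact: (@big_select_le R Num.real Num.min <=%R real_min_select real_min_le le_trans).
Qed.

Lemma real_bigmax_ge (I : eqType) (r : seq I) (x0 : R) (F : I -> R) k :
  x0 \is Num.real -> (forall i, F i \is Num.real) -> k \in r ->
  F k <= \big[Num.max/x0]_(i <- r) F i.
Proof.
have ge_trans : transitive (fun x y : R => y <= x).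
  by move=> y x z le_yx le_zy; exact: le_trans le_zy le_yx.
exact: (@big_select_le R Num.real Num.max _ real_max_select real_max_ge ge_trans).
Qed.
End RealMinMax.

Section InnerProduct.
Variables (C : numClosedFieldType) (d : nat).
Implicit Types u v w : 'I_d -> C.

Lemma inner_suml (m : nat) (c : 'I_m -> C) (u : 'I_m -> 'I_d -> C) v :
  inner (fun i => \sum_(k < m) c k * u k i) v = \sum_(k < m) (c k)^* * inner (u k) v.
Proof.
rewrite /inner; under eq_bigr do rewrite rmorph_sum big_distrl.
rewrite exchange_big; apply: eq_bigr => k _; rewrite mulr_sumr.
by apply: eq_bigr => i _; rewrite rmorphM mulrA.
Qed.

Lemma inner_sumr (m : nat) (c : 'I_m -> C) (u : 'I_m -> 'I_d -> C) v :
  inner v (fun i => \sum_(k < m) c k * u k i) = \sum_(k < m) c k * inner v (u k).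
Proof.
rewrite /inner; under eq_bigr do rewrite mulr_sumr.
rewrite exchange_big; apply: eq_bigr => k _; rewrite mulr_sumr.
by apply: eq_bigr => i _; rewrite mulrCA.
Qed.

Lemma inner_subl u w v : inner (fun i => u i - w i) v = inner u v - inner w v.
Proof. by rewrite /inner -sumrB; apply: eq_bigr => i _; rewrite rmorphB mulrBl. Qed.

Lemma inner_subr u w v : inner v (fun i => u i - w i) = inner v u - inner v w.
Proof. by rewrite /inner -sumrB; apply: eq_bigr => i _; rewrite mulrBr. Qed.

Lemma inner_conj u v : inner v u = (inner u v)^*.
Proof.
rewrite /inner rmorph_sum; apply: eq_bigr => i _.
by rewrite rmorphM /= conjCK mulrC.
Qed.

Lemma norm_inner_sym u v : `|inner v u| = `|inner u v|.
Proof. by rewrite inner_conj norm_conjC. Qed.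

Lemma inner_self_ge0 u : 0 <= inner u u.
Proof. by apply: sumr_ge0 => i _; rewrite -normCKC exprn_ge0. Qed.

(* Bessel's inequality for an orthonormal family of m vectors: it follows from
   |Φ - w|^2 >= 0, where w = Σ_k <φ_k,Φ> φ_k is the orthogonal projection of Φ. *)
Lemma bessel (m : nat) (phi : 'I_m -> 'I_d -> C) (Phi : 'I_d -> C) :
  (forall j k, inner (phi j) (phi k) = (j == k)%:R) ->
  \sum_(k < m) `|inner (phi k) Phi| ^+ 2 <= inner Phi Phi.
Proof.
move=> orth; set a := fun k => inner (phi k) Phi.
set w := fun i => \sum_(k < m) a k * phi k i.
have w_Phi : inner w Phi = \sum_(k < m) `|a k| ^+ 2.
  by rewrite inner_suml; apply: eq_bigr => k _; rewrite normCKC.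
have Phi_w : inner Phi w = \sum_(k < m) `|a k| ^+ 2.
  by rewrite inner_sumr; apply: eq_bigr => k _; rewrite normCK inner_conj.
have w_w : inner w w = \sum_(k < m) `|a k| ^+ 2.
  rewrite inner_suml; apply: eq_bigr => k _.
  rewrite inner_sumr (bigD1 k) //= orth eqxx mulr1 big1 ?addr0 ?normCKC //.
  by move=> l /negbTE nlk; rewrite orth eq_sym nlk mulr0.
have := inner_self_ge0 (fun i => Phi i - w i).
by rewrite inner_subl !inner_subr w_Phi Phi_w w_w opprB addrA subrK subr_ge0.
Qed.

Lemma bures_sqrt2 u v : `|inner u v| <= 1 ->
  bures u v = sqrtC 2 * sqrtC (1 - `|inner u v|).
Proof.
move=> le1; rewrite /bures -{1}[2]mulr1 -mulrBr.
by rewrite sqrtCM ?qualifE /= ?ler0n ?subr_ge0.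
Qed.

Lemma bures_antitone u v w : `|inner u w| <= `|inner u v| <= 1 ->
  bures u v <= bures u w.
Proof.
case/andP=> le_wv le_v1.
have le_w1 := le_trans le_wv le_v1.
rewrite !bures_sqrt2 // ler_pM2l ?sqrtC_gt0 ?pnatr_eq0 //.
by rewrite ler_sqrtC ?qualifE /= ?subr_ge0 // lerD2l lerN2.
Qed.
End InnerProduct.

(* After squaring it
   reads 2 - 2t <= 4 - 4x^2 <= 8 - 8x, the last step being 4(1 - x)^2 >= 0. *)
Lemma sqrt_overlap_bound (C : numClosedFieldType) (x t : C) :
  0 <= x <= 1 -> 2 * x ^+ 2 - 1 <= t <= 1 ->
  sqrtC (2 - 2 * t) <= 2 * sqrtC (2 - 2 * x).
Proof.
case/andP=> x_ge0 x_le1 /andP[t_ge t_le1].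
have two_sqrt : 2 * sqrtC (2 - 2 * x) = sqrtC (2 ^+ 2 * (2 - 2 * x)).
  by rewrite sqrtCM ?qualifE /= ?exprn_ge0 ?ler0n ?subr_ge0 ?ger_pMr ?sqrCK ?ler0n.
rewrite two_sqrt ler_sqrtC ?qualifE /=; last 2 first.
- by rewrite subr_ge0 ger_pMr ?ltr0n.
- by rewrite mulr_ge0 ?exprn_ge0 ?ler0n // subr_ge0 ger_pMr ?ltr0n.
apply: (@le_trans _ _ (2 - 2 * (2 * x ^+ 2 - 1))).
  by rewrite lerD2l lerN2 ler_pM2l ?ltr0n.
have -> : 2 ^+ 2 * (2 - 2 * x) = (2 - 2 * (2 * x ^+ 2 - 1)) + 4 * (x - 1) ^+ 2.
  by rewrite !expr2; ring.
rewrite lerDl mulr_ge0 ?ler0n // -real_normK ?exprn_ge0 //.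
by rewrite rpredB ?ger0_real ?real1.
Qed.

Definition overlap_term {C : numClosedFieldType} {d : nat}
  (phi : 'I_d -> 'I_d -> C) (Phi Psi : 'I_d -> C) (k : 'I_d) : C :=
  `|inner (phi k) Phi| * (phase phi Psi k)^* * inner (phi k) Phi.

Section Imposition.
Variables (C : numClosedFieldType) (d : nat).
Variables (phi : 'I_d -> 'I_d -> C) (Phi Psi : 'I_d -> C).
Hypothesis Hphi : orthonormal_basis phi.
Hypothesis HPhi : unit_vec Phi.

Lemma coef_le1 k : `|inner (phi k) Phi| <= 1.
Proof.
have := bessel Phi Hphi; rewrite HPhi (bigD1 k) //= => sum_le1.
rewrite -(@expr_le1 _ 2) //; apply: le_trans sum_le1.
by rewrite lerDl sumr_ge0 // => l _; rewrite exprn_ge0.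
Qed.

Lemma norm_phase k : `|phase phi Psi k| = 1.
Proof.
rewrite /phase; case: ifP => [nz|_]; last exact: normr1.
by rewrite normf_div normr_id divff // normr_eq0.
Qed.

Lemma inner_imposition :
  inner (imposition phi Phi Psi) Phi = \sum_(k < d) overlap_term phi Phi Psi k.
Proof.
rewrite /imposition inner_suml; apply: eq_bigr => k _.
by rewrite rmorphM /= conj_normC.
Qed.

Lemma norm_overlap_term k :
  `|overlap_term phi Phi Psi k| = `|inner (phi k) Phi| ^+ 2.
Proof. by rewrite !normrM norm_conjC norm_phase mulr1 normr_id expr2. Qed.

Lemma overlap_le1 : `|inner (imposition phi Phi Psi) Phi| <= 1.
Proof.
rewrite inner_imposition; apply: le_trans (ler_norm_sum _ _ _) _.
under eq_bigr do rewrite norm_overlap_term.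
by rewrite -HPhi bessel.
Qed.

(* Isolating the j-th contribution: |<TΨ,Φ>| >= a_j^2 - Σ_{k≠j} a_k^2 >= 2 a_j^2 - 1. *)
Lemma overlap_ge j :
  2 * `|inner (phi j) Phi| ^+ 2 - 1 <= `|inner (imposition phi Phi Psi) Phi|.
Proof.
set x := `|inner (phi j) Phi|; set s := \sum_(k < d) `|inner (phi k) Phi| ^+ 2.
have s_le1 : s <= 1 by rewrite -HPhi bessel.
have s_rest : s - x ^+ 2 = \sum_(k < d | k != j) `|inner (phi k) Phi| ^+ 2.
  by rewrite /s (bigD1 j) //= addrC addrK.
rewrite inner_imposition (bigD1 j) //=; apply: le_trans (lerB_normD _ _).
rewrite norm_overlap_term -/x.
apply: (@le_trans _ _ (x ^+ 2 - (s - x ^+ 2))).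
  rewrite -subr_ge0.
  have -> : x ^+ 2 - (s - x ^+ 2) - (2 * x ^+ 2 - 1) = 1 - s by ring.
  by rewrite subr_ge0.
rewrite lerD2l lerN2 s_rest.
apply: le_trans (ler_norm_sum _ _ _) _.
by apply: ler_sum => k _; rewrite norm_overlap_term.
Qed.

Lemma bures_imposition_le j :
  bures (imposition phi Phi Psi) Phi <= 2 * bures Phi (phi j).
Proof.
rewrite /bures [`|inner Phi _|]norm_inner_sym; apply: sqrt_overlap_bound.
  by rewrite normr_ge0 coef_le1.
by rewrite overlap_ge overlap_le1.
Qed.
End Imposition.

Theorem proposition2 (C : numClosedFieldType) (n : nat)
  (phi : 'I_n.+1 -> 'I_n.+1 -> C) (Phi : 'I_n.+1 -> C)
  (Hphi : orthonormal_basis phi) (HPhi : unit_vec Phi) :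
  let p := fun k : 'I_n.+1 => `|inner (phi k) Phi| ^+ 2 in
  let mind := \big[Num.min/bures Phi (phi ord0)]_(k < n.+1) bures Phi (phi k) in
  let maxsp := \big[Num.max/0]_(k < n.+1) sqrtC (p k) in
  (forall Psi : 'I_n.+1 -> C, unit_vec Psi ->
     bures (imposition phi Phi Psi) Phi <= 2 * mind)
  /\ 2 * mind = 2 * sqrtC 2 * sqrtC (1 - maxsp).
Proof.
move=> p mind maxsp.
set a := fun k => `|inner (phi k) Phi|.
have sqrt_p k : sqrtC (p k) = a k by rewrite /p sqrCK.
have dist_basis k : bures Phi (phi k) = sqrtC 2 * sqrtC (1 - a k).
  by rewrite bures_sqrt2 norm_inner_sym // (coef_le1 Hphi HPhi).
have dist_real k : bures Phi (phi k) \is Num.real.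
  by rewrite dist_basis ger0_real // mulr_ge0 ?sqrtC_ge0 ?ler0n // subr_ge0 (coef_le1 Hphi HPhi).
have sqrt_p_real k : sqrtC (p k) \is Num.real by rewrite sqrt_p normr_real.
have [i mind_i] : exists i, mind = bures Phi (phi i).
  have [_ [min0|[i min_i]]] := big_select (@real_min_select C) (index_enum 'I_n.+1)
    (dist_real ord0) dist_real; by [exists ord0 | exists i].
split=> [Psi _|]; first by rewrite mind_i bures_imposition_le.
have max_ge k : a k <= maxsp.
  rewrite -sqrt_p; apply: (real_bigmax_ge (F := fun i => sqrtC (p i))) => //.
  exact: mem_index_enum.
have [j max_j] : exists j, maxsp = a j.
  have [_ [max0|[j max_j]]] := big_select (@real_max_select C) (index_enum 'I_n.+1)
    (real0 C) sqrt_p_real; last by exists j; rewrite -sqrt_p.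
  by exists ord0; apply/eqP; rewrite eq_le max_ge andbT /maxsp max0 normr_ge0.
have mind_j : mind = bures Phi (phi j).
  apply/eqP; rewrite eq_le real_bigmin_le ?mem_index_enum //= mind_i.
  rewrite bures_antitone // ![`|inner Phi _|]norm_inner_sym (coef_le1 Hphi HPhi) andbT.
  have le_ij : a i <= a j by rewrite -max_j max_ge.
  exact: le_ij.
by rewrite mind_j max_j dist_basis mulrA.
Qed.
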